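(* In Streamlet, an honest validator (one following the protocol) never violates a Streamlet slashing condition.
   Context: Streamlet with $n$ validators: time is divided into epochs, each with a leader. The leader of epoch $e$ proposes a block extending one of the longest notarized chains it has seen; an honest validator votes at most once per epoch, and only for the leader's proposal if it extends one of the longest notarized chains the validator has seen. A block is notarized once it has votes from at least $2n/3$ validators. For a block $B$, $e_B$ denotes its epoch and $|B|$ its depth. Streamlet slashing conditions: a validator violates a slashing condition if (1) it votes for two blocks $B_1,B_2$ with $e_{B_1}=e_{B_2}$, or (2) it votes for $B_1,B_2$ with $e_{B_1}<e_{B_2}$ but $|B_1|>|B_2|$. *)

From mathcomp Require Import all_boot.
Set Implicit Arguments. Unset Strict Implicit. Unset Printing Implicit Defensive.

(* A block is identified with the (hash-linked) chain ending at it: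
   a list of (epoch, payload) entries, newest first.  The genesis block is
   the empty chain [::], of epoch 0 and depth 0. *)
Definition Block := seq (nat * nat).

Definition genesis : Block := [::].

Definition bepoch (B : Block) : nat := if B is x :: _ then x.1 else 0.

Definition depth (B : Block) : nat := size B.

Definition extends_chain (B C : Block) : Prop := exists x, B = x :: C.

(* The views of validators: recv i t j B  means that by (the voting time of)
   epoch t validator i has received a vote of validator j for block B. *)
Definition view (n : nat) := nat -> 'I_n -> Block -> Prop.

(* B is notarized in the view of validator i at time t:
   votes from at least 2n/3 validators, i.e. 3 * #voters >= 2 * n.
   The genesis block is notarized by convention. *)
Definition notarized_in (n : nat) (recv : 'I_n -> view n) (i : 'I_n) (t : nat)
  (B : Block) : Prop :=
  B = genesis \/
  exists S : {set 'I_n}, 2 * n <= 3 * #|S| /\ forall j, j \in S -> recv i t j B.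

Definition notarized_chain (n : nat) (recv : 'I_n -> view n) (i : 'I_n) (t : nat)
  (C : Block) : Prop :=
  forall k, k <= size C -> notarized_in recv i t (drop k C).

Definition longest_notarized (n : nat) (recv : 'I_n -> view n) (i : 'I_n) (t : nat)
  (C : Block) : Prop :=
  notarized_chain recv i t C /\
  forall C', notarized_chain recv i t C' -> depth C' <= depth C.

(* votes j e = Some B : validator j casts (its) vote for B in epoch e.
   Views only contain actually cast votes, and views only grow over time. *)
Definition sound_views (n : nat) (votes : 'I_n -> nat -> option Block)
  (recv : 'I_n -> view n) : Prop :=
  forall i t j B, recv i t j B -> exists e, votes j e = Some B.

Definition monotone_views (n : nat) (recv : 'I_n -> view n) : Prop :=
  forall i t1 t2 j B, t1 <= t2 -> recv i t1 j B -> recv i t2 j B.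

(* Honest behaviour of validator h: at most one vote per epoch (built into
   the type of votes h), and the vote in epoch e is only for the leader's
   proposal of epoch e (a block of epoch e), which must extend one of the
   longest notarized chains h has seen at that time. *)
Definition honest (n : nat) (votes : 'I_n -> nat -> option Block)
  (recv : 'I_n -> view n) (h : 'I_n) : Prop :=
  forall e B, votes h e = Some B ->
    bepoch B = e /\
    exists C, extends_chain B C /\ longest_notarized recv h e C.

Definition votes_for (n : nat) (votes : 'I_n -> nat -> option Block) (j : 'I_n)
  (B : Block) : Prop := exists e, votes j e = Some B.

Definition violates_slashing (n : nat) (votes : 'I_n -> nat -> option Block)
  (j : 'I_n) : Prop :=
  (exists B1 B2, votes_for votes j B1 /\ votes_for votes j B2 /\
     B1 <> B2 /\ bepoch B1 = bepoch B2)
  \/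
  (exists B1 B2, votes_for votes j B1 /\ votes_for votes j B2 /\
     bepoch B1 < bepoch B2 /\ depth B2 < depth B1).

From mathcomp Require Import all_boot.

Set Implicit Arguments. Unset Strict Implicit. Unset Printing Implicit Defensive.

(* An honest vote cast in epoch e is for a block of epoch e, so the epoch of a
   block determines which of h's votes it is, and two distinct blocks voted by
   h cannot share an epoch.  For the depth condition, a vote in epoch e2
   extends a longest notarized chain of h's view at e2; since views only grow,
   the parent of any earlier vote is still a notarized chain at e2, hence no
   longer, and the two votes add one block each. *)

Section MonotoneViews.

Variables (n : nat) (recv : 'I_n -> view n).
Hypothesis recv_mono : monotone_views recv.

Lemma notarized_in_mono (i : 'I_n) (t1 t2 : nat) (B : Block) :
  t1 <= t2 -> notarized_in recv i t1 B -> notarized_in recv i t2 B.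
Proof.
move=> le_t [->|[S [quorumS votedS]]]; first by left.
by right; exists S; split=> // j /votedS; apply: recv_mono.
Qed.

Lemma notarized_chain_mono (i : 'I_n) (t1 t2 : nat) (C : Block) :
  t1 <= t2 -> notarized_chain recv i t1 C -> notarized_chain recv i t2 C.
Proof. by move=> le_t notC k /notC; apply: notarized_in_mono. Qed.

End MonotoneViews.

Section HonestVotes.

Variables (n : nat) (votes : 'I_n -> nat -> option Block).
Variables (recv : 'I_n -> view n) (h : 'I_n).
Hypothesis h_honest : honest votes recv h.

Lemma honest_vote_epoch (e : nat) (B : Block) :
  votes h e = Some B -> bepoch B = e.
Proof. by case/h_honest. Qed.

Lemma honest_votes_epoch_inj (B1 B2 : Block) :
  votes_for votes h B1 -> votes_for votes h B2 ->
  bepoch B1 = bepoch B2 -> B1 = B2.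
Proof.
move=> [e1 vote1] [e2 vote2].
rewrite (honest_vote_epoch vote1) (honest_vote_epoch vote2) => eq_e.
by move: vote1; rewrite eq_e vote2 => -[].
Qed.

Hypothesis recv_mono : monotone_views recv.

Lemma honest_votes_depth_mono (B1 B2 : Block) :
  votes_for votes h B1 -> votes_for votes h B2 ->
  bepoch B1 <= bepoch B2 -> depth B1 <= depth B2.
Proof.
move=> [e1 vote1] [e2 vote2].
have [<- [C1 [[x ->] [notC1 _]]]] := h_honest vote1.
have [<- [C2 [[y ->] [_ longestC2]]]] := h_honest vote2.
move=> le_e; rewrite /depth /= ltnS.
exact/longestC2/(notarized_chain_mono recv_mono le_e).
Qed.

End HonestVotes.

Theorem lemma2 (n : nat) (votes : 'I_n -> nat -> option Block)
  (recv : 'I_n -> view n) (h : 'I_n) :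
  sound_views votes recv ->
  monotone_views recv ->
  honest votes recv h ->
  ~ violates_slashing votes h.
Proof.
(* Only h's own votes are inspected. *)
move=> _ recv_mono h_honest.
case=> [[B1 [B2 [vote1 [vote2 [neqB eq_e]]]]]
       |[B1 [B2 [vote1 [vote2 [lt_e lt_d]]]]]].
- exact/neqB/(honest_votes_epoch_inj h_honest vote1 vote2).
- have := honest_votes_depth_mono h_honest recv_mono vote1 vote2 (ltnW lt_e).
  by rewrite leqNgt lt_d.
Qed.
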